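(* For every $h\in R$, the binary representation of $h$ does not contain $10000$ as a contiguous substring.
   Context: Stern's sequence $(a(n))_{n\ge0}$: $a(0)=0$, $a(1)=1$, $a(2n)=a(n)$, $a(2n+1)=a(n)+a(n+1)$; $s(n)=a(n+1)$ for $n\ge0$. $R$ is the set of record-setters of $s$, i.e. indices $v\ge0$ with $s(i)<s(v)$ for all $i<v$. The binary representation of a positive integer has no leading zeros; $0$ is represented by the string $0$. *)

From Stdlib Require Import PArith NArith.
From mathcomp Require Import all_boot.
Set Implicit Arguments. Unset Strict Implicit. Unset Printing Implicit Defensive.

(* Stern's diatomic sequence a : nat -> nat, a(0)=0, a(1)=1, a(2n)=a(n),
   a(2n+1)=a(n)+a(n+1).  Computed via the pair (a m, a (m+1)) by structural
   recursion on the binary representation of m >= 1. *)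
Fixpoint stern_pair (p : positive) : nat * nat :=
  match p with
  | xH => (1, 1)
  | xO q => let '(x, y) := stern_pair q in (x, x + y)
  | xI q => let '(x, y) := stern_pair q in (x + y, y)
  end.

Definition stern (n : nat) : nat :=
  match N.of_nat n with
  | N0 => 0
  | Npos p => (stern_pair p).1
  end.

Definition s (n : nat) : nat := stern n.+1.

Definition R (v : nat) : Prop := forall i, i < v -> s i < s v.

(* binary representation, most significant bit first, true = 1;
   0 is represented by the string "0" *)
Fixpoint pos_bits (p : positive) : seq bool :=
  match p with
  | xH => [:: true]
  | xO q => rcons (pos_bits q) false
  | xI q => rcons (pos_bits q) true
  end.

Definition bin (n : nat) : seq bool :=
  match N.of_nat n with
  | N0 => [:: false]
  | Npos p => pos_bits p
  end.

Lemma stern0 : stern 0 = 0. Proof. by []. Qed.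
Lemma stern1 : stern 1 = 1. Proof. by []. Qed.
Example stern_vals : map stern (iota 0 10) = [:: 0; 1; 1; 2; 1; 3; 2; 3; 1; 4].
Proof. by vm_compute. Qed.
Example stern_rec : all (fun n => (stern n.*2 == stern n) && (stern n.*2.+1 == stern n + stern n.+1)) (iota 0 200).
Proof. by vm_compute. Qed.
Example bin_vals : bin 6 = [:: true; true; false] /\ bin 0 = [:: false].
Proof. by vm_compute. Qed.

(* A record-setter cannot contain the block 10000 in binary: replacing it by
   01100 gives a smaller index, and since reading the bits 10000 sends the
   Stern pair (x, y) = (a n, a (n+1)) to (x + y, 4x + 5y) whereas 01100 sends it
   to (3x + 2y, 7x + 5y), and reading further bits is monotone in the pair, the
   smaller index has an s-value at least as large. *)

From Stdlib Require Import PArith NArith Lia.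
From mathcomp Require Import all_boot zify.

Lemma stern_pair_succ p : (stern_pair (Pos.succ p)).1 = (stern_pair p).2.
Proof.
elim: p => [q IHq|q _|] //=; last by case: (stern_pair q).
by move: IHq; case: (stern_pair q) => x y; case: (stern_pair (Pos.succ q)) => ? ? /= ->.
Qed.

Definition sternN (m : N) : nat :=
  if m is Npos p then (stern_pair p).1 else 0.

Lemma sternN_double m : sternN (N.double m) = sternN m.
Proof. by case: m => // p /=; case: (stern_pair p). Qed.

Lemma sternN_succ_double m :
  sternN (N.succ_double m) = sternN m + sternN (N.succ m).
Proof. by case: m => // p /=; rewrite stern_pair_succ; case: (stern_pair p). Qed.

Lemma stern_double n : stern n.*2 = stern n.
Proof.
have -> : n.*2 = (2 * n)%coq_nat by lia.
by rewrite /stern Nat2N.inj_double -/(sternN _) sternN_double.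
Qed.

Lemma stern_double_succ n : stern n.*2.+1 = stern n + stern n.+1.
Proof.
have -> : n.*2.+1 = S (2 * n)%coq_nat by lia.
by rewrite /stern Nat2N.inj_succ_double -!/(sternN _) sternN_succ_double Nat2N.inj_succ.
Qed.

Definition num (w : seq bool) : nat := foldl (fun n (b : bool) => n.*2 + b) 0 w.

Lemma num_rcons w b : num (rcons w b) = (num w).*2 + b.
Proof. by rewrite /num foldl_rcons. Qed.

Lemma num_cat u w : num (u ++ w) = num u * 2 ^ size w + num w.
Proof.
elim/last_ind: w => [|w b IHw]; first by rewrite cats0 muln1 addn0.
by rewrite -rcons_cat !num_rcons IHw size_rcons expnS; lia.
Qed.

Lemma num_pos_bits p : num (pos_bits p) = Pos.to_nat p.
Proof.
by elim: p => [q IHq|q IHq|] //=; rewrite num_rcons IHq;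
  rewrite ?Pos2Nat.inj_xI ?Pos2Nat.inj_xO -mul2n; lia.
Qed.

Lemma num_bin n : num (bin n) = n.
Proof.
rewrite /bin; case En: (N.of_nat n) => [|p]; first by have -> : n = 0 by lia.
by rewrite num_pos_bits; have := Nat2N.id n; rewrite En /=; lia.
Qed.

Lemma num_infix_lt p q u w :
  size u = size w -> num u < num w -> num (p ++ u ++ q) < num (p ++ w ++ q).
Proof.
move=> size_uw lt_uw; rewrite !num_cat !size_cat size_uw ltn_add2l ltn_add2r.
by rewrite ltn_pmul2r ?expn_gt0.
Qed.

(* The effect on the pair (a n, a (n+1)) of appending the bit b to n. *)
Definition stern_step (v : nat * nat) (b : bool) : nat * nat :=
  if b then (v.1 + v.2, v.2) else (v.1, v.1 + v.2).

Lemma stern_num_foldl w :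
  foldl stern_step (0, 1) w = (stern (num w), stern (num w).+1).
Proof.
elim/last_ind: w => [|w b IHw] //.
rewrite foldl_rcons IHw num_rcons /stern_step.
case: b; rewrite /= ?addn1 ?addn0 -?doubleS ?stern_double_succ ?stern_double //.
Qed.

Definition pair_le (v w : nat * nat) := (v.1 <= w.1) && (v.2 <= w.2).

Lemma pair_le_foldl_stern_step {v w} q :
  pair_le v w -> pair_le (foldl stern_step v q) (foldl stern_step w q).
Proof.
elim: q v w => [|b q IHq] v w //= /andP[le1 le2]; apply: IHq.
by case: b; apply/andP; split; rewrite /= ?leq_add.
Qed.

Lemma R_not_infix u w n :
  size u = size w -> num u < num w ->
  (forall v, pair_le (foldl stern_step v w) (foldl stern_step v u)) ->
  R n -> ~~ infix w (bin n).
Proof.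
move=> size_uw lt_uw dom_uw Rn; apply/negP => /infixP[p [q bin_n]].
move: Rn; rewrite -(num_bin n) bin_n => /(_ _ (num_infix_lt p q _ _ size_uw lt_uw)).
have /andP[_] := pair_le_foldl_stern_step q (dom_uw (foldl stern_step (0, 1) p)).
by rewrite /s -!foldl_cat !stern_num_foldl /= leqNgt => /negP.
Qed.

Theorem mainTheorem7 (h : nat) :
  R h -> ~~ infix [:: true; false; false; false; false] (bin h).
Proof.
apply: (@R_not_infix [:: false; true; true; false; false]) => // -[x y].
by rewrite /pair_le /=; apply/andP; split; lia.
Qed.
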